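(* Let $\mathbf{A} \in \mathbb{R}^{L \times N}$, $\mathbf{L}_2 \in \mathbb{R}^{M_2 \times N}$ and $\lambda_2 > 0$. Assume: (i) $\mathbf{A}$ has full row rank, so that $\mathbf{A}\mathbf{A}^T$ is invertible; (ii) $\ker \mathbf{A} \cap \ker \mathbf{L}_2 = \{\mathbf{0}\}$; (iii) $\ker(\mathbf{A})^\perp$ is an invariant subspace of $\mathbf{L}_2^T\mathbf{L}_2$, i.e. $\mathbf{x} \in \ker(\mathbf{A})^\perp \Rightarrow \mathbf{L}_2^T\mathbf{L}_2\mathbf{x} \in \ker(\mathbf{A})^\perp$. Let $\mathbf{\Lambda}_2 = (\mathbf{A}\mathbf{A}^T)^{-1}\mathbf{A}\mathbf{L}_2^T\mathbf{L}_2\mathbf{A}^T$. Then $$(\mathbf{A}^T\mathbf{A} + \lambda_2\mathbf{L}_2^T\mathbf{L}_2)^{-1}\mathbf{A}^T = \mathbf{A}^T(\mathbf{A}\mathbf{A}^T + \lambda_2\mathbf{\Lambda}_2)^{-1},$$ where both inverses appearing in this identity exist.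
   Context: $\ker(\mathbf{A})^\perp$ denotes the orthogonal complement of the nullspace of $\mathbf{A}$ in $\mathbb{R}^N$. *)

From mathcomp Require Import all_boot all_order all_algebra.
From mathcomp Require Import reals.
Set Implicit Arguments. Unset Strict Implicit. Unset Printing Implicit Defensive.
Import Order.TTheory GRing.Theory Num.Theory.
Local Open Scope ring_scope.

Definition in_ker (R : realType) (L N : nat) (A : 'M[R]_(L, N)) (x : 'cV[R]_N) : Prop :=
  A *m x = 0.

Definition dotv (R : realType) (N : nat) (x y : 'cV[R]_N) : R :=
  \sum_(i < N) x i 0 * y i 0.

Definition in_ker_perp (R : realType) (L N : nat) (A : 'M[R]_(L, N)) (x : 'cV[R]_N) : Prop :=
  forall y : 'cV[R]_N, in_ker A y -> dotv y x = 0.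

(** The invariance of ker(A)^⊥ under P := L2^T L2 means that P maps the range of
    A^T (which is ker(A)^⊥) into itself; expressed in the coordinates A^T y this
    is the intertwining relation P A^T = A^T Λ2.  Hence
    G A^T = A^T M for G := A^T A + λ2 P and M := A A^T + λ2 Λ2.  G is positive
    definite because ker A ∩ ker L2 = 0, and A^T is injective since A has full
    row rank, so M is invertible as well and G^-1 A^T = A^T M^-1. *)

From mathcomp Require Import all_boot all_order all_algebra.
From mathcomp Require Import reals.
Set Implicit Arguments. Unset Strict Implicit. Unset Printing Implicit Defensive.
Import Order.TTheory GRing.Theory Num.Theory.
Local Open Scope ring_scope.

Section MatrixFacts.
Variable R : realFieldType.

Lemma trmx_mul_self_ge0 n (x : 'cV[R]_n) : 0 <= (x^T *m x) 0 0.
Proof. by rewrite mxE; apply: sumr_ge0 => i _; rewrite mxE -expr2 sqr_ge0. Qed.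

Lemma trmx_mul_self_eq0 n (x : 'cV[R]_n) : (x^T *m x) 0 0 = 0 -> x = 0.
Proof.
rewrite mxE => /eqP; rewrite psumr_eq0 => [/allP x2_0|i _]; last first.
  by rewrite mxE -expr2 sqr_ge0.
apply/matrixP => i j; rewrite ord1 !mxE.
by move: (x2_0 i (mem_index_enum i)); rewrite mxE mulf_eq0 orbb => /eqP.
Qed.

Lemma inj_unitmx n (B : 'M[R]_n) :
  (forall x : 'cV_n, B *m x = 0 -> x = 0) -> B \in unitmx.
Proof.
move=> Binj; rewrite -unitmx_tr -row_free_unit; apply: inj_row_free => v vBT0.
apply: trmx_inj; rewrite trmx0; apply: Binj.
by rewrite -[B]trmxK -trmx_mul vBT0 trmx0.
Qed.

Lemma trmx_row_free_inj m n (A : 'M[R]_(m, n)) :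
  row_free A -> forall y : 'cV_m, A^T *m y = 0 -> y = 0.
Proof.
move=> freeA y ATy0; apply: trmx_inj; rewrite trmx0.
apply: (row_free_inj freeA); rewrite mul0mx.
by rewrite -[A]trmxK -trmx_mul ATy0 trmx0.
Qed.

Lemma row_free_gram_unitmx m n (A : 'M[R]_(m, n)) :
  row_free A -> A *m A^T \in unitmx.
Proof.
move=> freeA; apply: inj_unitmx => y AATy0.
apply: (trmx_row_free_inj freeA); apply: trmx_mul_self_eq0.
by rewrite trmx_mul trmxK -mulmxA (mulmxA A) AATy0 mulmx0 mxE.
Qed.

Lemma tikhonov_unitmx m1 m2 n (A : 'M[R]_(m1, n)) (B : 'M[R]_(m2, n)) (lam : R) :
  0 < lam -> (forall x : 'cV_n, A *m x = 0 -> B *m x = 0 -> x = 0) ->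
  A^T *m A + lam *: (B^T *m B) \in unitmx.
Proof.
move=> lam_gt0 kerAB0; apply: inj_unitmx => x Gx0.
have quad : (A *m x)^T *m (A *m x) + lam *: ((B *m x)^T *m (B *m x)) = 0.
  rewrite -[0](mulmx0 _ x^T) -Gx0 mulmxDl mulmxDr -scalemxAl -!scalemxAr.
  by rewrite !trmx_mul !mulmxA.
move/(congr1 (fun C : 'M_1 => C 0 0)): quad.
rewrite mxE [X in _ + X]mxE [X in _ = X]mxE => /eqP.
rewrite paddr_eq0 ?mulr_ge0 ?(ltW lam_gt0) ?trmx_mul_self_ge0 //.
rewrite mulf_eq0 (gt_eqF lam_gt0) /=.
by case/andP=> /eqP/trmx_mul_self_eq0 Ax0 /eqP/trmx_mul_self_eq0 Bx0; apply: kerAB0.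
Qed.

Lemma invmx_intertwined n m (G : 'M[R]_n) (M : 'M[R]_m) (B : 'M[R]_(n, m)) :
  (forall y : 'cV_m, B *m y = 0 -> y = 0) -> G \in unitmx -> G *m B = B *m M ->
  M \in unitmx /\ invmx G *m B = B *m invmx M.
Proof.
move=> Binj Gu GBBM.
have Mu : M \in unitmx.
  apply: inj_unitmx => y My0; apply: Binj.
  rewrite -[B *m y]mul1mx -(mulVmx Gu) -mulmxA (mulmxA G) GBBM.
  by rewrite -(mulmxA B) My0 !mulmx0.
split=> //.
by rewrite -[LHS](mulmxK Mu) -(mulmxA (invmx G)) -GBBM mulmxA mulVmx // mul1mx.
Qed.

End MatrixFacts.

Section KernelComplement.
Variables (R : realType) (m n : nat) (A : 'M[R]_(m, n)).

Lemma dotvE (x y : 'cV[R]_n) : dotv x y = (x^T *m y) 0 0.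
Proof. by rewrite /dotv mxE; apply: eq_bigr => i _; rewrite mxE. Qed.

Lemma ker_perp_mulmx_tr (v : 'cV[R]_m) : in_ker_perp A (A^T *m v).
Proof. by move=> y Ay0; rewrite dotvE mulmxA -trmx_mul Ay0 trmx0 mul0mx mxE. Qed.

Hypothesis freeA : row_free A.

(* The remainder [z] of [x] after projection onto the range of [A^T] lies in
   ker A, so it is orthogonal both to [x] and to that projection. *)
Lemma ker_perp_range (x : 'cV[R]_n) :
  in_ker_perp A x -> x = A^T *m (invmx (A *m A^T) *m A *m x).
Proof.
move=> x_perp; set t := invmx (A *m A^T) *m A *m x; set z := x - A^T *m t.
have Az0 : A *m z = 0.
  rewrite mulmxBr mulmxA /t !mulmxA.
  by rewrite mulmxV ?row_free_gram_unitmx // mul1mx subrr.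
have z0 : z = 0.
  apply: trmx_mul_self_eq0.
  have -> : z^T *m z = z^T *m x - z^T *m (A^T *m t) by rewrite -mulmxBr.
  rewrite mxE [X in _ + X]mxE.
  have := x_perp z Az0; rewrite dotvE => ->.
  by have := ker_perp_mulmx_tr t Az0; rewrite dotvE => ->; rewrite subrr.
by apply/eqP; rewrite -subr_eq0 -/z z0.
Qed.

Lemma ker_perp_stable_intertwined (P : 'M[R]_n) :
  (forall x, in_ker_perp A x -> in_ker_perp A (P *m x)) ->
  P *m A^T = A^T *m (invmx (A *m A^T) *m A *m P *m A^T).
Proof.
move=> P_stable; apply/matrixP => i j; apply: (col_eq (j1 := j) (j2 := j)).
rewrite !colE !mulmxA -(mulmxA P).
rewrite {1}(ker_perp_range (P_stable _ (ker_perp_mulmx_tr (delta_mx j 0)))).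
by rewrite !mulmxA.
Qed.

End KernelComplement.

Theorem lemma1 (R : realType) (L N M2 : nat)
  (A : 'M[R]_(L, N)) (L2 : 'M[R]_(M2, N)) (lambda2 : R)
  (hlam : 0 < lambda2)
  (hrank : \rank A = L)
  (hker : forall x : 'cV[R]_N, in_ker A x -> in_ker L2 x -> x = 0)
  (hinv : forall x : 'cV[R]_N, in_ker_perp A x ->
            in_ker_perp A ((L2^T *m L2) *m x)) :
  let Lambda2 := invmx (A *m A^T) *m A *m L2^T *m L2 *m A^T in
  [/\ (A^T *m A + lambda2 *: (L2^T *m L2)) \in unitmx,
      (A *m A^T + lambda2 *: Lambda2) \in unitmx &
      invmx (A^T *m A + lambda2 *: (L2^T *m L2)) *m A^T
        = A^T *m invmx (A *m A^T + lambda2 *: Lambda2)].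
Proof.
move=> Lambda2.
have freeA : row_free A by rewrite /row_free hrank.
have Gu := tikhonov_unitmx hlam hker.
have PAT : L2^T *m L2 *m A^T = A^T *m Lambda2.
  by rewrite (ker_perp_stable_intertwined freeA hinv) /Lambda2 !mulmxA.
have GAT : (A^T *m A + lambda2 *: (L2^T *m L2)) *m A^T
         = A^T *m (A *m A^T + lambda2 *: Lambda2).
  by rewrite mulmxDl mulmxDr -scalemxAl -scalemxAr PAT !mulmxA.
have [Mu GinvAT] := invmx_intertwined (trmx_row_free_inj freeA) Gu GAT.
by split.
Qed.
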